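(* Let $\Pi=(\mathsf A,\mathsf B)$ be a protocol. Then for every $\delta\in(0,\frac12]$ there exists a constant $c=c(\delta)>0$ (depending only on $\delta$) such that for every $\delta'\ge\delta$ and $\gamma>1$: $$\Pr_{\ell\leftarrow L_{(\mathsf A^{(1)}_\Pi,\mathsf B)}}\Big[\ell\in\mathrm{desc}\big(\mathrm{Unbal}_\Pi(\gamma)\setminus\overline{\mathrm{desc}}(\mathrm{Low}_\Pi(\delta',\mathsf A))\big)\Big]\le\frac{2}{\gamma^{c}}.$$
   Context: An $m$-round single-bit-message protocol $\Pi$ is identified with the complete binary tree of height $m$ (nodes are binary strings, leaves of length $m$), with control scheme, edge probabilities, output $\chi_\Pi:\text{leaves}\to\{0,1\}$, visit probabilities $v_\Pi(u)$, leaf distribution $L_\Pi$; $\Pi_u$ is the subprotocol under node $u$ and $\mathrm{val}(\Pi_u)$ its expected output (taken $0$ if $v_\Pi(u)=0$). The biased-continuation attacker $\mathsf A^{(1)}_\Pi$: at an $\mathsf A$-controlled node $u$ it samples $\ell\leftarrow L_\Pi$ conditioned on $\ell$ extending $u$ and $\chi_\Pi(\ell)=1$ (an arbitrary leaf under $u$ if impossible) and sends $\ell_{|u|+1}$. $\mathrm{Unbal}_\Pi(\gamma)=\{u\text{ non-leaf}: v_{(\mathsf A^{(1)}_\Pi,\mathsf B)}(u)\ge\gamma\cdot v_\Pi(u)\}$. $\mathrm{Low}_\Pi(\delta,\mathsf A)=\{u\text{ non-leaf, controlled by }\mathsf A:\mathrm{val}(\Pi_u)\le\delta\}$. $\mathrm{desc}(\mathcal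 S)$ is the set of nodes with an ancestor (possibly itself) in $\mathcal S$; $\overline{\mathrm{desc}}(\mathcal S)=\bigcup_{u\in\mathcal S}(\text{descendants of }u\text{ other than }u)$. *)

From HB Require Import structures.
From mathcomp Require Import all_boot all_order all_algebra.
From mathcomp Require Import all_classical all_reals all_analysis.
Set Implicit Arguments. Unset Strict Implicit. Unset Printing Implicit Defensive.
Import Order.TTheory GRing.Theory Num.Theory.
Local Open Scope ring_scope.

(* An m-round single-bit-message protocol: nodes are binary strings (seq bool)
   of length <= m; leaves are those of length m.
   - ctrlA u   : node u is controlled by A (otherwise by B)
   - eprob u   : probability that the message sent at node u is 1
                 (i.e. that the edge u -> rcons u true is taken)
   - out l     : the output chi_Pi(l) on leaves l. *)
Record protocol (R : realType) := Protocol {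
  ctrlA : seq bool -> bool;
  eprob : seq bool -> R;
  out   : seq bool -> bool }.

Section Defs.
Variables (R : realType) (m : nat).

Definition wf_protocol (P : protocol R) : Prop :=
  forall u : seq bool, (size u < m)%N -> 0 <= eprob P u <= 1.

Definition edge (e : seq bool -> R) (u : seq bool) (b : bool) : R :=
  if b then e u else 1 - e u.

Definition visit (e : seq bool -> R) (u : seq bool) : R :=
  \prod_(i < size u) edge e (take i u) (nth false u i).

Fixpoint valsub_aux (P : protocol R) (k : nat) (u : seq bool) : R :=
  match k with
  | O => (out P u)%:R
  | k'.+1 => eprob P u * valsub_aux P k' (rcons u true)
             + (1 - eprob P u) * valsub_aux P k' (rcons u false)
  end.

Definition val (P : protocol R) (u : seq bool) : R :=
  if visit (eprob P) u == 0 then 0 else valsub_aux P (m - size u) u.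

(* At an A-controlled node u the
   biased-continuation attacker sends 1 with probability
   Pr_{l<-L_Pi}[l extends rcons u true, chi l = 1] / Pr[l extends u, chi l = 1]
   = eprob u * val(rcons u true) / val u when this conditioning is possible
   (val u > 0); otherwise it sends the next bit of an arbitrary leaf under u,
   modelled by an arbitrary fallback probability q u of sending 1. *)
Definition att_eprob (P : protocol R) (q : seq bool -> R) (u : seq bool) : R :=
  if ctrlA P u then
    (if 0 < val P u then eprob P u * val P (rcons u true) / val P u else q u)
  else eprob P u.

Definition Unbal (P : protocol R) (q : seq bool -> R) (gamma : R)
    (u : seq bool) : bool :=
  (size u < m)%N && (gamma * visit (eprob P) u <= visit (att_eprob P q) u).

Definition LowA (P : protocol R) (delta : R) (u : seq bool) : bool :=
  [&& (size u < m)%N, ctrlA P u & val P u <= delta].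

Definition in_desc (S : pred (seq bool)) (u : seq bool) : bool :=
  has (fun k => S (take k u)) (iota 0 (size u).+1).

Definition in_sdesc (S : pred (seq bool)) (u : seq bool) : bool :=
  has (fun k => S (take k u)) (iota 0 (size u)).

Definition attack_event_prob (P : protocol R) (q : seq bool -> R)
    (gamma delta' : R) : R :=
  \sum_(l : m.-tuple bool)
    visit (att_eprob P q) l *
    (in_desc (fun u => Unbal P q gamma u && ~~ in_sdesc (LowA P delta') u)
             l)%:R.

End Defs.

From Pilot Require Import Defs.
From HB Require Import structures.
From mathcomp Require Import all_boot all_order all_algebra.
From mathcomp Require Import all_classical all_reals all_analysis.
From mathcomp Require Import ring lra.
Set Implicit Arguments. Unset Strict Implicit. Unset Printing Implicit Defensive.
Import Order.TTheory GRing.Theory Num.Theory.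
Local Open Scope ring_scope.

(* Let W and V be the visit probabilities of (A^(1), B) and of the honest
   protocol, and take c = delta / 2.  The potential
     Phi(u) = W(u) (W(u) / V(u))^c (2 - val(u)) / gamma^c
   is at most 2 / gamma^c at the root, dominates W(u) (the mass of every leaf
   below u) at an unbalanced node since there W(u) / V(u) >= gamma, and is
   superadditive over the two children of every node outside Low.  At a
   B-node this is an identity; at an A-node the attacker reweights child b by
   r_b = val(ub) / val(u), and after the Bernoulli bound r^c <= 1 + c (r - 1)
   superadditivity becomes a quadratic inequality in the r_b which holds as
   soon as 2c <= val(u), i.e. precisely because u is not in Low.  Below a
   Low node the event is empty. *)

Lemma powR_le_bernoulli (R : realType) (r c : R) :
  0 <= r -> 0 < c < 1 -> r `^ c <= 1 + c * (r - 1).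
Proof.
move=> r_ge0 /andP[c_gt0 c_lt1].
have ci_gt0 : 0 < c^-1 by rewrite invr_gt0.
have c'i_gt0 : 0 < (1 - c)^-1 by rewrite invr_gt0 subr_gt0.
(* Young's inequality with exponents 1/c and 1/(1-c), applied to r^c and 1 *)
have := conjugate_powR (powR_ge0 r c) ler01 ci_gt0 c'i_gt0.
rewrite !invrK subrKC => /(_ erefl).
rewrite -powRrM mulfV ?gt_eqF // powRr1 // powR1 mulr1 mul1r => /le_trans; apply.
lra.
Qed.

Lemma big_tuple0 (V : nmodType) (T : finType) (F : seq T -> V) :
  \sum_(t : 0.-tuple T) F t = F [::].
Proof. by rewrite (big_pred1 [tuple]) // => t; apply/esym/eqP/tuple0. Qed.

Lemma big_tuple_cons (V : nmodType) (T : finType) n (F : seq T -> V) :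
  \sum_(t : n.+1.-tuple T) F t = \sum_(x : T) \sum_(t : n.-tuple T) F (x :: t).
Proof.
rewrite pair_big /= (reindex (fun p : T * n.-tuple T => [tuple of p.1 :: p.2])) //=.
exists (fun t : n.+1.-tuple T => (thead t, [tuple of behead t])) => [[x t] _|t _].
  by congr (_, _); apply: val_inj.
by apply: val_inj; case: t => -[].
Qed.

Lemma in_sdesc_rcons (S : pred (seq bool)) u b :
  in_sdesc S (rcons u b) = in_sdesc S u || S u.
Proof.
rewrite /in_sdesc size_rcons -addn1 iotaD has_cat /= add0n orbF.
rewrite -cats1 takel_cat // take_size; congr (_ || _).
by apply: eq_in_has => k; rewrite mem_iota => /andP[_ k_lt]; rewrite takel_cat // ltnW.
Qed.

Section Visit.
Variables (R : realType) (e : seq bool -> R).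

Lemma visit_nil : visit e [::] = 1.
Proof. by rewrite /visit big_ord0. Qed.

Lemma visit_rcons u b : visit e (rcons u b) = visit e u * edge e u b.
Proof.
rewrite /visit size_rcons big_ord_recr /= -cats1 takel_cat // take_size.
rewrite nth_cat ltnn subnn; congr (_ * _); apply: eq_bigr => i _.
by rewrite takel_cat ?nth_cat ?ltn_ord // ltnW.
Qed.

Lemma edge_ge0 u b : 0 <= e u <= 1 -> 0 <= edge e u b.
Proof. by case/andP=> e_ge0 e_le1; case: b; rewrite /edge // subr_ge0. Qed.

Lemma visit_ge0 u :
  (forall v, (size v < size u)%N -> 0 <= e v <= 1) -> 0 <= visit e u.
Proof.
move=> e_in01; apply: prodr_ge0 => i _; apply/edge_ge0/e_in01.
by rewrite size_take !ltn_ord.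
Qed.

Lemma sum_visit_cat n u : \sum_(t : n.-tuple bool) visit e (u ++ t) = visit e u.
Proof.
elim: n u => [|n IH] u; first by rewrite (big_tuple0 (fun t => visit e (u ++ t))) cats0.
rewrite (big_tuple_cons _ (fun t => visit e (u ++ t))) big_bool /=.
under eq_bigr do rewrite -cat_rcons.
under [X in _ + X]eq_bigr do rewrite -cat_rcons.
by rewrite !IH !visit_rcons /edge; ring.
Qed.

Variable S : pred (seq bool).

Fixpoint hit n u : R :=
  if S u then visit e u else
  if n is n'.+1 then hit n' (rcons u true) + hit n' (rcons u false) else 0.

Lemma hitE n u : hit n u = \sum_(t : n.-tuple bool)
  visit e (u ++ t) * (has (fun j => S (take j (u ++ t))) (iota (size u) n.+1))%:R.
Proof.
elim: n u => [|n IH] u.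
  rewrite (big_tuple0 (fun t => visit e (u ++ t) *
    (has (fun j => S (take j (u ++ t))) (iota (size u) 1))%:R)).
  by rewrite cats0 /= take_size orbF; case: (S u); rewrite ?mulr1 ?mulr0.
rewrite (big_tuple_cons _ (fun t => visit e (u ++ t) *
  (has (fun j => S (take j (u ++ t))) (iota (size u) n.+2))%:R)) /=.
under eq_bigr do under eq_bigr do rewrite take_size_cat //.
case: (S u).
  rewrite -(sum_visit_cat n.+1 u) (big_tuple_cons _ (fun t => visit e (u ++ t))).
  by apply: eq_bigr => b _; apply: eq_bigr => t _; rewrite mulr1.
rewrite big_bool !IH /=.
by congr (_ + _); apply: eq_bigr => t _; rewrite -cat_rcons size_rcons.
Qed.

Lemma sum_visit_in_desc n :
  \sum_(l : n.-tuple bool) visit e l * (in_desc S l)%:R = hit n [::].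
Proof. by rewrite hitE; apply: eq_bigr => t _; rewrite /in_desc size_tuple. Qed.

End Visit.

Lemma split_bound_poly (R : realFieldType) (e r1 r0 c v : R) :
  0 <= e <= 1 -> 0 <= r1 -> 0 <= r0 -> e * r1 + (1 - e) * r0 = 1 ->
  0 <= c -> 2 * c <= v ->
  e * r1 * (1 + c * (r1 - 1)) * (2 - r1 * v)
    + (1 - e) * r0 * (1 + c * (r0 - 1)) * (2 - r0 * v) <= 2 - v.
Proof.
move=> /andP[e_ge0 e_le1] r1_ge0 r0_ge0 mean1 c_ge0 c_le.
rewrite -subr_ge0.
have -> : 2 - v - (e * r1 * (1 + c * (r1 - 1)) * (2 - r1 * v)
    + (1 - e) * r0 * (1 + c * (r0 - 1)) * (2 - r0 * v)) =
  (v - (1 + c) * (2 - v)) * (e * r1 + (1 - e) * r0 - 1)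
  + (v + c * v - 2 * c) * (e * (r1 - 1) ^+ 2 + (1 - e) * (r0 - 1) ^+ 2)
  + c * v * (e * r1 * (r1 - 1) ^+ 2 + (1 - e) * r0 * (r0 - 1) ^+ 2).
  by ring.
have e'_ge0 : 0 <= 1 - e by rewrite subr_ge0.
have cv_ge0 : 0 <= c * v by rewrite mulr_ge0 //; lra.
have k_ge0 : 0 <= v + c * v - 2 * c by lra.
have sq1_ge0 := sqr_ge0 (r1 - 1); have sq0_ge0 := sqr_ge0 (r0 - 1).
rewrite mean1 subrr mulr0 add0r; apply: addr_ge0; apply: mulr_ge0 => //;
  apply: addr_ge0; apply: mulr_ge0 => //; exact: mulr_ge0.
Qed.

Lemma split_bound_powR (R : realType) (e r1 r0 c v : R) :
  0 <= e <= 1 -> 0 <= r1 -> 0 <= r0 -> e * r1 + (1 - e) * r0 = 1 ->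
  0 < c < 1 -> 2 * c <= v -> r1 * v <= 2 -> r0 * v <= 2 ->
  e * r1 * r1 `^ c * (2 - r1 * v) + (1 - e) * r0 * r0 `^ c * (2 - r0 * v)
    <= 2 - v.
Proof.
move=> e_in01 r1_ge0 r0_ge0 mean1 c_in01 c_le r1v_le r0v_le.
have /andP[e_ge0 e_le1] := e_in01; have /andP[c_gt0 _] := c_in01.
have := split_bound_poly e_in01 r1_ge0 r0_ge0 mean1 (ltW c_gt0) c_le.
apply: le_trans; apply: lerD;
  rewrite ler_wpM2r ?subr_ge0 // ler_wpM2l ?mulr_ge0 ?subr_ge0 //;
  exact: powR_le_bernoulli.
Qed.

Section Protocol.
Variables (R : realType) (m : nat) (P : protocol R).
Hypothesis wfP : wf_protocol m P.

Local Notation V := (visit (eprob P)).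
Local Notation value := (Defs.val m P).

Lemma valsub_aux_in01 k u :
  (size u + k <= m)%N -> 0 <= valsub_aux P k u <= 1.
Proof.
elim: k u => [|k IH] u hk /=; first by case: (out P u); rewrite ?lexx ?ler01.
have hs : (size u < m)%N by apply: leq_trans hk; rewrite addnS ltnS leq_addr.
have /andP[e_ge0 e_le1] := wfP hs.
have IHb b : 0 <= valsub_aux P k (rcons u b) <= 1.
  by apply: IH; rewrite size_rcons addSnnS.
have /andP[v1_ge0 v1_le1] := IHb true; have /andP[v0_ge0 v0_le1] := IHb false.
apply/andP; split; nra.
Qed.

Lemma val_in01 u : (size u <= m)%N -> 0 <= value u <= 1.
Proof.
move=> hu; rewrite /Defs.val; case: eqP => _; first by rewrite lexx ler01.
by apply: valsub_aux_in01; rewrite subnKC.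
Qed.

Lemma val_rcons_in01 u b : (size u < m)%N -> 0 <= value (rcons u b) <= 1.
Proof. by move=> hs; apply: val_in01; rewrite size_rcons. Qed.

Lemma val_rcons_mean u : (size u < m)%N -> V u != 0 ->
  value u = eprob P u * value (rcons u true)
            + (1 - eprob P u) * value (rcons u false).
Proof.
move=> hs hV; rewrite {1}/Defs.val (negbTE hV) -(subnSK hs) /=.
have hb b : edge (eprob P) u b * value (rcons u b)
    = edge (eprob P) u b * valsub_aux P (m - (size u).+1) (rcons u b).
  rewrite /Defs.val visit_rcons size_rcons mulf_eq0 (negbTE hV) /=.
  by case: eqP => [->|]; rewrite ?mul0r.
by move: (hb true) (hb false); rewrite /edge => -> ->.
Qed.

Variable q : seq bool -> R.
Hypothesis q_in01 : forall u, 0 <= q u <= 1.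

Local Notation W := (visit (att_eprob m P q)).

Lemma att_eprob_in01 u : (size u < m)%N -> 0 <= att_eprob m P q u <= 1.
Proof.
move=> hs; rewrite /att_eprob; case: (ctrlA P u); last exact: wfP.
case: ifP => [v_gt0|_]; last exact: q_in01.
have hV : V u != 0 by apply: contraTneq v_gt0 => V0; rewrite /Defs.val V0 eqxx ltxx.
have /andP[e_ge0 e_le1] := wfP hs.
have /andP[v1_ge0 v1_le1] := val_rcons_in01 true hs.
have /andP[v0_ge0 v0_le1] := val_rcons_in01 false hs.
rewrite divr_ge0 ?mulr_ge0 ?(ltW v_gt0) //= ler_pdivrMr // mul1r.
by rewrite (val_rcons_mean hs hV); nra.
Qed.

Lemma visit_att_ge0 u : (size u <= m)%N -> 0 <= W u.
Proof.
move=> hu; apply: visit_ge0 => v hv; apply: att_eprob_in01.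
exact: leq_trans hv hu.
Qed.

Variable delta' : R.
Hypothesis delta'_ge0 : 0 <= delta'.

Local Notation L := (LowA m P delta').

Definition ratio u b : R :=
  if ctrlA P u then value (rcons u b) / value u else 1.

Lemma ratio_ge0 u b : (size u < m)%N -> 0 <= ratio u b.
Proof.
move=> hs; rewrite /ratio; case: ifP => // _.
have /andP[v_ge0 _] := val_in01 (ltnW hs).
by have /andP[vb_ge0 _] := val_rcons_in01 b hs; rewrite divr_ge0.
Qed.

Lemma notLow_val_gt u : (size u < m)%N -> ctrlA P u -> ~~ L u -> delta' < value u.
Proof. by move=> hs hA; rewrite /LowA hs hA -ltNge. Qed.

Lemma edge_att_ratio u b : (size u < m)%N -> V u != 0 -> ~~ L u ->
  edge (att_eprob m P q) u b = edge (eprob P) u b * ratio u b.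
Proof.
move=> hs hV hL; rewrite /ratio /edge /att_eprob.
case hA: (ctrlA P u); last by rewrite !mulr1; case: b.
have v_gt0 := le_lt_trans delta'_ge0 (notLow_val_gt hs hA hL).
rewrite v_gt0; case: b; first by rewrite mulrA.
rewrite [RHS]mulrA (_ : (1 - eprob P u) * _ = value u - eprob P u * value (rcons u true)).
  by rewrite mulrBl divff ?gt_eqF.
by rewrite (val_rcons_mean hs hV); ring.
Qed.

Lemma visit_att_gt0 u : (size u <= m)%N -> ~~ in_sdesc L u -> W u != 0 -> 0 < V u.
Proof.
elim/last_ind: u => [|u b IH]; first by move=> *; rewrite visit_nil ltr01.
rewrite size_rcons in_sdesc_rcons negb_or => hs /andP[hLs hL].
rewrite visit_rcons mulf_eq0 negb_or => /andP[Wn].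
have V_gt0 := IH (ltnW hs) hLs Wn.
rewrite (edge_att_ratio _ hs (lt0r_neq0 V_gt0) hL) mulf_eq0 negb_or => /andP[eb_neq0 _].
by rewrite visit_rcons mulr_gt0 // lt0r eb_neq0 edge_ge0 // wfP.
Qed.

Variables (gamma c : R).
Hypothesis gamma_gt1 : 1 < gamma.
Hypothesis c_in01 : 0 < c < 1.
Hypothesis c_le_delta' : 2 * c <= delta'.

Let target u := Unbal m P q gamma u && ~~ in_sdesc L u.

Definition potential u : R :=
  W u * (W u / V u) `^ c * (2 - value u) / gamma `^ c.

Lemma potential_ge0 u : (size u <= m)%N -> 0 <= potential u.
Proof.
move=> hu; have /andP[_ v_le1] := val_in01 hu.
rewrite /potential divr_ge0 ?powR_ge0 // !mulr_ge0 ?powR_ge0 ?visit_att_ge0 //.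
lra.
Qed.

Lemma potential_rcons u b r : (size u < m)%N -> 0 < V u -> 0 <= r ->
  edge (att_eprob m P q) u b = edge (eprob P) u b * r ->
  potential (rcons u b) = W u * (W u / V u) `^ c / gamma `^ c
    * (edge (eprob P) u b * r * r `^ c * (2 - value (rcons u b))).
Proof.
move=> hs V_gt0 r_ge0 hatt; rewrite /potential !visit_rcons hatt.
set eb := edge (eprob P) u b.
have [->|eb_neq0] := eqVneq eb 0; first by rewrite !(mul0r, mulr0).
have -> : W u * (eb * r) / (V u * eb) = W u / V u * r.
  by field; rewrite eb_neq0 gt_eqF.
by rewrite powRM ?divr_ge0 ?visit_att_ge0 ?(ltW V_gt0) ?(ltnW hs) //; ring.
Qed.

Lemma potential_split u : (size u < m)%N -> ~~ in_sdesc L u -> ~~ L u ->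
  potential (rcons u true) + potential (rcons u false) <= potential u.
Proof.
move=> hs hLs hL.
have [W0|Wn] := eqVneq (W u) 0.
  by rewrite /potential !visit_rcons W0 !mul0r addr0.
have V_gt0 := visit_att_gt0 (ltnW hs) hLs Wn.
have hatt b := edge_att_ratio b hs (lt0r_neq0 V_gt0) hL.
rewrite !(potential_rcons hs V_gt0 (ratio_ge0 _ hs) (hatt _)) -mulrDr.
rewrite [leRHS]/potential [leRHS]mulrAC; apply: ler_wpM2l.
  have W_ge0 := visit_att_ge0 (ltnW hs).
  by rewrite divr_ge0 ?powR_ge0 // mulr_ge0 ?powR_ge0.
have e_in01 := wfP hs.
have hmean := val_rcons_mean hs (lt0r_neq0 V_gt0).
rewrite /ratio /edge; case hA: (ctrlA P u); last first.
  have one_powR : 1 `^ c = 1 by rewrite powR1.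
  by rewrite one_powR !mulr1 hmean; lra.
have v_gt := notLow_val_gt hs hA hL.
have v_gt0 := le_lt_trans delta'_ge0 v_gt.
have /andP[v1_ge0 v1_le1] := val_rcons_in01 true hs.
have /andP[v0_ge0 v0_le1] := val_rcons_in01 false hs.
have := @split_bound_powR R (eprob P u) (value (rcons u true) / value u)
  (value (rcons u false) / value u) c (value u) e_in01.
rewrite !divfK ?gt_eqF //; apply; rewrite ?divr_ge0 ?(ltW v_gt0) //; try lra.
  by rewrite !mulrA -mulrDl -hmean divff ?gt_eqF.
exact: le_trans c_le_delta' (ltW v_gt).
Qed.

Lemma potential_unbal u : (size u < m)%N -> ~~ in_sdesc L u ->
  Unbal m P q gamma u -> W u <= potential u.
Proof.
move=> hs hLs /andP[_ hU].
have W_ge0 := visit_att_ge0 (ltnW hs).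
have [W0|Wn] := eqVneq (W u) 0; first by rewrite W0 potential_ge0 // ltnW.
have V_gt0 := visit_att_gt0 (ltnW hs) hLs Wn.
have gamma_gt0 : 0 < gamma := lt_trans ltr01 gamma_gt1.
have /andP[c_gt0 _] := c_in01.
have gamma_le : gamma <= W u / V u by rewrite ler_pdivlMr.
have /andP[_ v_le1] := val_in01 (ltnW hs).
have -> : potential u = W u * ((W u / V u) `^ c / gamma `^ c * (2 - value u)).
  by rewrite /potential; ring.
rewrite -[leLHS]mulr1; apply: ler_wpM2l => //.
apply: mulr_ege1; last by lra.
rewrite ler_pdivlMr ?powR_gt0 // mul1r.
apply: ge0_ler_powR; rewrite ?nnegrE ?(ltW c_gt0) ?(ltW gamma_gt0) //.
exact: le_trans (ltW gamma_gt0) gamma_le.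
Qed.

Lemma potential_nil : potential [::] <= 2 / gamma `^ c.
Proof.
have /andP[v_ge0 _] : 0 <= value [::] <= 1 by apply: val_in01.
have one_powR : 1 `^ c = 1 by rewrite powR1.
rewrite /potential !visit_nil divr1 one_powR !mul1r.
by apply: ler_wpM2r; rewrite ?invr_ge0 ?powR_ge0 //; lra.
Qed.

Lemma hit_low n u : in_sdesc L u -> hit (att_eprob m P q) target n u = 0.
Proof.
elim: n u => [|n IH] u hLs /=; rewrite /target hLs andbF //.
by rewrite !IH ?addr0 // in_sdesc_rcons hLs.
Qed.

Lemma hit_le_potential n u : (size u + n = m)%N -> ~~ in_sdesc L u ->
  hit (att_eprob m P q) target n u <= potential u.
Proof.
elim: n u => [|n IH] u hs hLs /=.
  rewrite addn0 in hs; rewrite /target /Unbal hs ltnn /=.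
  by apply: potential_ge0; rewrite hs.
have hs' : (size u < m)%N by rewrite -hs addnS ltnS leq_addr.
case hT: (target u).
  by case/andP: hT => hU _; apply: potential_unbal.
have [hL|hL] := boolP (L u).
  rewrite !hit_low ?in_sdesc_rcons ?hL ?orbT // addr0.
  exact: potential_ge0 (ltnW hs').
apply: le_trans (potential_split hs' hLs hL).
by apply: lerD; apply: IH; rewrite ?size_rcons ?addSnnS // in_sdesc_rcons negb_or hLs.
Qed.

End Protocol.

Theorem lemma4p7 (R : realType) (delta : R) :
  0 < delta <= 2^-1 ->
  exists c : R, 0 < c /\
    forall (m : nat) (P : protocol R) (q : seq bool -> R) (delta' gamma : R),
      wf_protocol m P ->
      (forall u : seq bool, 0 <= q u <= 1) ->
      delta <= delta' -> 1 < gamma ->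
      attack_event_prob m P q gamma delta' <= 2 / (gamma `^ c).
Proof.
move=> /andP[delta_gt0 delta_le]; exists (delta / 2); split; first by rewrite divr_gt0.
move=> m P q delta' gamma wfP q_in01 delta_le' gamma_gt1.
have c_in01 : 0 < delta / 2 < 1 by apply/andP; split; lra.
have c_le : 2 * (delta / 2) <= delta' by lra.
have delta'_ge0 : 0 <= delta' by lra.
rewrite /attack_event_prob sum_visit_in_desc.
apply: (@le_trans _ _ (potential m P q gamma (delta / 2) [::])).
  by apply: hit_le_potential.
exact: potential_nil.
Qed.
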